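(* (Working in $\mathbf{ZF}$.) Every weakly Hausdorff topologically compact generalized topological space is weakly normal.
   Context: A generalized topological space (gts) $(X,\mathrm{Op}_X,\mathrm{Cov}_X)$ is in the sense of Delfs–Knebusch: $\mathrm{Op}_X\subseteq\mathcal P(X)$ contains $\emptyset,X$ and is closed under finite unions and intersections, $\mathrm{Cov}_X$ is a collection of subfamilies of $\mathrm{Op}_X$ (admissible coverings) satisfying the Delfs–Knebusch axioms (finite families are admissible; unions of admissible families are open; admissible families restrict to open subsets of their union, are stable under admissible refinement and under coarsening with the same union; and a set whose traces on all members of an admissible family are open is open). $\mathrm{Cl}_X=\{X\setminus U:U\in\mathrm{Op}_X\}$. The topologization $X_{top}$ is $X$ with the topology generated by $\mathrm{Op}_X$. The gts is topologically compact if $X_{top}$ is compact, and weakly Hausdorff if $X_{top}$ is Hausdorff. It is weakly normal if for every disjoint $A_1,A_2\subseteq X$, each of which is a singleton or a member of $\mathrm{Cl}_X$, there exist disjoint $W_1,W_2\in\mathrm{Op}_X$ with $A_i\subseteq W_i$ ($i=1,2$). *)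

From HB Require Import structures.
From mathcomp Require Import all_boot.
From mathcomp Require Import boolp classical_sets cardinality.
Set Implicit Arguments. Unset Strict Implicit. Unset Printing Implicit Defensive.
Local Open Scope classical_set_scope.

(* Generalized topological space in the sense of Delfs–Knebusch,
   with families of subsets represented as sets of sets. *)
Record gts (X : Type) (Op : set (set X)) (Cov : set (set (set X))) : Prop := {
  gts_op0 : Op set0;
  gts_opT : Op setT;
  gts_opU : forall U V, Op U -> Op V -> Op (U `|` V);
  gts_opI : forall U V, Op U -> Op V -> Op (U `&` V);
  gts_cov_sub : forall U, Cov U -> U `<=` Op;
  gts_cov_fin : forall U, U `<=` Op -> finite_set U -> Cov U;
  gts_cov_open : forall U, Cov U -> Op (\bigcup_(W in U) W);
  gts_cov_restr : forall U V, Cov U -> Op V -> V `<=` \bigcup_(W in U) W ->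
      Cov [set V `&` W | W in U];
  gts_cov_refine : forall U (F : set X -> set (set X)), Cov U ->
      (forall W, U W -> Cov (F W) /\ \bigcup_(V in F W) V = W) ->
      Cov (\bigcup_(W in U) F W);
  gts_cov_coarsen : forall U V, U `<=` Op -> Cov V ->
      \bigcup_(W in U) W = \bigcup_(W in V) W ->
      (forall W, V W -> exists2 W', U W' & W `<=` W') -> Cov U;
  gts_cov_local : forall U V, Cov U -> V `<=` \bigcup_(W in U) W ->
      (forall W, U W -> Op (V `&` W)) -> Op V
}.

Definition Cl (X : Type) (Op : set (set X)) : set (set X) :=
  [set A | exists2 U, Op U & A = ~` U].

Definition is_topology (X : Type) (T : set (set X)) : Prop :=
  [/\ T set0, T setT,
      (forall U V, T U -> T V -> T (U `&` V)) &
      (forall F : set (set X), F `<=` T -> T (\bigcup_(W in F) W))].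

Definition top_open (X : Type) (Op : set (set X)) (A : set X) : Prop :=
  forall T : set (set X), is_topology T -> Op `<=` T -> T A.

Definition top_compact (X : Type) (Op : set (set X)) : Prop :=
  forall F : set (set X), F `<=` top_open Op -> \bigcup_(W in F) W = setT ->
    exists2 G : set (set X), G `<=` F & finite_set G /\ \bigcup_(W in G) W = setT.

Definition top_hausdorff (X : Type) (Op : set (set X)) : Prop :=
  forall x y : X, x <> y -> exists U V, [/\ top_open Op U, top_open Op V,
     U x, V y & U `&` V = set0].

Definition weakly_normal (X : Type) (Op : set (set X)) : Prop :=
  forall A1 A2 : set X,
    ((exists x, A1 = [set x]) \/ Cl Op A1) ->
    ((exists x, A2 = [set x]) \/ Cl Op A2) ->
    A1 `&` A2 = set0 ->
    exists W1 W2, [/\ Op W1, Op W2, W1 `&` W2 = set0, A1 `<=` W1 & A2 `<=` W2].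

From mathcomp Require Import all_boot.
From mathcomp Require Import boolp classical_sets cardinality.
Set Implicit Arguments.
Unset Strict Implicit.
Unset Printing Implicit Defensive.
Local Open Scope classical_set_scope.

(* Because [Op] is closed under finite intersections it is a base of
   [X_top], so the Hausdorff property separates two points by members of [Op].
   A set that is a singleton or the complement of a member of [Op] is compact
   in [X_top]; hence if each of its points can be separated from a set [B] by
   members of [Op], then finitely many of these separations suffice, and their
   unions and intersections separate the whole set from [B].  Applying this
   twice (points from points, then points from sets) gives weak normality. *)

Definition separated (X : Type) (Op : set (set X)) (A B : set X) : Prop :=
  exists W1 W2, [/\ Op W1, Op W2, W1 `&` W2 = set0, A `<=` W1 & B `<=` W2].

Lemma separatedC (X : Type) (Op : set (set X)) (A B : set X) :
  separated Op A B -> separated Op B A.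
Proof. by move=> [W1 [W2 [OW1 OW2 W12 AW1 BW2]]]; exists W2, W1; rewrite setIC. Qed.

Lemma bigcup_finite_closed (X : Type) (P G : set (set X)) :
  P set0 -> (forall U V, P U -> P V -> P (U `|` V)) ->
  finite_set G -> G `<=` P -> P (\bigcup_(W in G) W).
Proof.
move=> P0 PU /finite_fsetP[S ->] SP.
by rewrite (bigcup_fset id) big_seq; apply: big_ind => // W; apply: SP.
Qed.

Section LatticeOfOpens.
Variables (X : Type) (Op : set (set X)).
Hypotheses (op0 : Op set0) (opT : Op setT).
Hypothesis opU : forall U V, Op U -> Op V -> Op (U `|` V).
Hypothesis opI : forall U V, Op U -> Op V -> Op (U `&` V).

Lemma Op_top_open : Op `<=` top_open Op.
Proof. by move=> A OA T _; apply. Qed.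

Lemma top_open_base (A : set X) (x : X) :
  top_open Op A -> A x -> exists2 B, Op B & B x /\ B `<=` A.
Proof.
move=> tA; move: x; apply: (tA [set A | forall x, A x ->
  exists2 B, Op B & B x /\ B `<=` A]); last first.
  by move=> U OU x Ux; exists U => //; split.
split=> /=.
- by [].
- by move=> x _; exists setT.
- move=> U V HU HV x [Ux Vx].
  have [B1 OB1 [B1x B1U]] := HU x Ux; have [B2 OB2 [B2x B2V]] := HV x Vx.
  by exists (B1 `&` B2); [exact: opI | split=> // y [/B1U ? /B2V ?]; split].
- move=> F FT x [W FW Wx]; have [B OB [Bx BW]] := FT W FW x Wx.
  by exists B => //; split=> // y /BW; exists W.
Qed.

Lemma top_hausdorff_separated (x y : X) :
  top_hausdorff Op -> x <> y -> separated Op [set x] [set y].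
Proof.
move=> haus xy; have [U [V [tU tV Ux Vy UV]]] := haus x y xy.
have [B1 OB1 [B1x B1U]] := top_open_base tU Ux.
have [B2 OB2 [B2y B2V]] := top_open_base tV Vy.
exists B1, B2; split=> // [|_ -> //|_ -> //].
by rewrite -subset0 -UV => z [/B1U ? /B2V ?].
Qed.

Lemma top_compact_cover (P : set (set X)) (A : set X) :
  top_compact Op -> P `<=` Op -> P set0 ->
  (forall U V, P U -> P V -> P (U `|` V)) ->
  (exists x, A = [set x]) \/ Cl Op A ->
  (forall z, A z -> exists2 W, P W & W z) -> exists2 W, P W & A `<=` W.
Proof.
move=> cpt POp P0 PU [[x ->]|[U OU ->]] PA.
  by have [W PW Wx] := PA x erefl; exists W => // _ ->.
have UP_open : [set U] `|` P `<=` top_open Op.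
  by move=> W [->|/POp]; exact: Op_top_open.
have [|G GUP [finG GT]] := cpt _ UP_open.
  rewrite -subTset => z _; have [Uz|nUz] := pselect (U z).
    by exists U => //; left.
  by have [W PW Wz] := PA z nUz; exists W => //; right.
exists (\bigcup_(W in G `&` P) W).
  by apply: bigcup_finite_closed => //; exact: finite_setIl.
move=> z nUz; have [W GW Wz] : (\bigcup_(W in G) W) z by rewrite GT.
by exists W => //; split=> //; case: (GUP W GW) => // WU; rewrite WU in Wz.
Qed.

Lemma top_compact_separated (A B : set X) :
  top_compact Op -> (exists x, A = [set x]) \/ Cl Op A ->
  (forall a, A a -> separated Op [set a] B) -> separated Op A B.
Proof.
move=> cpt clA sepA.
pose P := [set W1 | Op W1 /\ exists2 W2, Op W2 & W1 `&` W2 = set0 /\ B `<=` W2].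
have [||||z Az|W1 [OW1 [W2 OW2 [W12 BW2]]] AW1] := @top_compact_cover P A cpt.
- by move=> W [].
- by split=> //; exists setT => //; rewrite set0I.
- move=> U V [OU [U2 OU2 [UU2 BU2]]] [OV [V2 OV2 [VV2 BV2]]].
  split; first exact: opU.
  exists (U2 `&` V2); first exact: opI.
  split=> [|y By]; last by split; [exact: BU2 | exact: BV2].
  rewrite setIUl -subset0 => y [[Uy [U2y _]]|[Vy [_ V2y]]].
    by rewrite -UU2; split.
  by rewrite -VV2; split.
- exact: clA.
- have [W1 [W2 [OW1 OW2 W12 zW1 BW2]]] := sepA z Az.
  by exists W1; [split=> //; exists W2 | exact: zW1].
- by exists W1, W2.
Qed.

End LatticeOfOpens.

Theorem proposition3p15 (X : Type) (Op : set (set X)) (Cov : set (set (set X))) :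
  gts Op Cov -> top_hausdorff Op -> top_compact Op -> weakly_normal Op.
Proof.
move=> g haus cpt A1 A2 clA1 clA2 A12.
case: g => op0 opT opU opI _ _ _ _ _ _ _.
apply: top_compact_separated => // x A1x.
apply: separatedC; apply: top_compact_separated => // z A2z.
apply: top_hausdorff_separated => // zx.
by rewrite -subset0 in A12; apply: (A12 x); split; rewrite // -zx.
Qed.
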